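(* Let $\Gamma$ be a group generated by $d$ elements and let $N$ be a $\mathbb{Z}\Gamma$-module generated by $t$ elements as a $\mathbb{Z}\Gamma$-module. Suppose $N_0\le N$ is a $\mathbb{Z}\Gamma$-submodule of finite index $b=|N:N_0|$. Then $N_0$ can be generated by at most $t+(2d+1)\log_2 b$ elements as a $\mathbb{Z}\Gamma$-module. *)

From Stdlib Require Import Reals.
From mathcomp Require Import all_boot all_algebra.
Set Implicit Arguments. Unset Strict Implicit. Unset Printing Implicit Defensive.
Import GRing.Theory.

Record is_group (G : Type) (mul : G -> G -> G) (one : G) (inv : G -> G) : Prop := {
  grp_mulA : forall x y z, mul x (mul y z) = mul (mul x y) z;
  grp_mul1 : forall x, mul one x = x;
  grp_mulV : forall x, mul (inv x) x = one
}.

Inductive in_subgroup_gen (G : Type) (mul : G -> G -> G) (one : G) (inv : G -> G)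
    (S : G -> Prop) : G -> Prop :=
  | sg_base x : S x -> in_subgroup_gen mul one inv S x
  | sg_one : in_subgroup_gen mul one inv S one
  | sg_mul x y : in_subgroup_gen mul one inv S x -> in_subgroup_gen mul one inv S y ->
                 in_subgroup_gen mul one inv S (mul x y)
  | sg_inv x : in_subgroup_gen mul one inv S x -> in_subgroup_gen mul one inv S (inv x).

Definition group_generated_by (G : Type) (mul : G -> G -> G) (one : G) (inv : G -> G)
    (gens : seq G) : Prop :=
  forall g, in_subgroup_gen mul one inv (fun x => List.In x gens) g.

(* A (left) ZG-module structure on the abelian group N: an action of G on N
   by additive maps, i.e. a group homomorphism G -> Aut(N). *)
Record is_ZG_module (G : Type) (mul : G -> G -> G) (one : G) (N : zmodType)
    (act : G -> N -> N) : Prop := {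
  act_add : forall g (x y : N), act g (x + y)%R = (act g x + act g y)%R;
  act_one : forall x, act one x = x;
  act_mul : forall g h x, act (mul g h) x = act g (act h x)
}.

Record is_submodule (G : Type) (N : zmodType) (act : G -> N -> N) (M : N -> Prop) : Prop := {
  sub0 : M 0%R;
  subD : forall x y, M x -> M y -> M (x + y)%R;
  subN : forall x, M x -> M (- x)%R;
  subA : forall g x, M x -> M (act g x)
}.

Inductive in_submodule_gen (G : Type) (N : zmodType) (act : G -> N -> N)
    (S : N -> Prop) : N -> Prop :=
  | sm_base x : S x -> in_submodule_gen act S x
  | sm_zero : in_submodule_gen act S 0%R
  | sm_add x y : in_submodule_gen act S x -> in_submodule_gen act S y ->
                 in_submodule_gen act S (x + y)%R
  | sm_opp x : in_submodule_gen act S x -> in_submodule_gen act S (- x)%R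
  | sm_act g x : in_submodule_gen act S x -> in_submodule_gen act S (act g x).

Definition module_generated_by (G : Type) (N : zmodType) (act : G -> N -> N)
    (M : N -> Prop) (gens : seq N) : Prop :=
  (forall x, List.In x gens -> M x) /\
  (forall x, M x <-> in_submodule_gen act (fun y => List.In y gens) x).

Definition has_index (N : zmodType) (N0 : N -> Prop) (b : nat) : Prop :=
  exists reps : seq N, size reps = b /\
    (forall i j, (i < b)%N -> (j < b)%N -> N0 (nth 0%R reps i - nth 0%R reps j)%R -> i = j) /\
    (forall x : N, exists i, (i < b)%N /\ N0 (x - nth 0%R reps i)%R).

Definition gen_bound (t d b : nat) : R :=
  Rplus (INR t) (Rmult (INR (2 * d + 1)) (Rdiv (ln (INR b)) (ln (INR 2)))).

(* The quotient N/N0 has order b, so a chain of Z-spans [zspan U] strictly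
   increasing modulo N0 reaches all of N after k <= log_2 b steps: each step at
   least doubles the number of classes met.  For such U = [u_1; ...; u_k] the
   intersection [zspan U :&: N0] is spanned by the k relations [u_i *+ n_i - w_i],
   where n_i is the least positive multiple of u_i in [zspan [u_1..u_(i-1)] + N0].
   Pick for every y a representative [rd y] in [zspan U] with [y - rd y] in N0.
   Let J be the submodule generated by the k relations and the t + 2dk elements
   [y - rd y], y ranging over the t generators of N and the translates of the
   u_i by the d group generators and their inverses.  Then [J + zspan U] is
   stable under the group generators, hence a submodule containing the
   generators of N, so N = J + zspan U; an element of N0 thus lies in J up to
   an element of [zspan U :&: N0], which lies in J too. *)

From Stdlib Require Import Reals.
From mathcomp Require Import all_boot all_algebra.
From Stdlib Require Import ClassicalEpsilon Lra.
From mathcomp Require Import zify.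
Set Implicit Arguments. Unset Strict Implicit. Unset Printing Implicit Defensive.
Import GRing.Theory.

Section Log2.
Local Open Scope R_scope.

Lemma le_log2 (n b : nat) : (2 ^ n <= b)%N -> INR n <= ln (INR b) / ln (INR 2).
Proof.
have INR_exp2 : INR (2 ^ n) = INR 2 ^ n.
  by elim: n => [|n IHn] //=; rewrite expnS mult_INR IHn.
move=> /leP/le_INR; rewrite INR_exp2 => le_2n_b.
have two_gt1 : 1 < INR 2 by rewrite [INR 2]/=; lra.
have ln2_gt0 : 0 < ln (INR 2) by rewrite -ln_1; apply: ln_increasing; lra.
have pow_gt0 : 0 < INR 2 ^ n by apply: pow_lt; lra.
apply: (Rmult_le_reg_r (ln (INR 2))) => //.
rewrite /Rdiv Rmult_assoc Rinv_l ?Rmult_1_r -?ln_pow; try lra.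
case/Rle_lt_or_eq_dec: le_2n_b => [lt_2n_b | <-]; last exact: Rle_refl.
by apply: Rlt_le; apply: ln_increasing.
Qed.

Lemma le_gen_bound (t d b n : nat) :
  (2 ^ n <= b)%N -> INR (t + (2 * d + 1) * n) <= gen_bound t d b.
Proof.
move=> /le_log2 le_n_log2b; rewrite /gen_bound plus_INR mult_INR.
by apply: Rplus_le_compat_l; apply: Rmult_le_compat_l; first exact: pos_INR.
Qed.

End Log2.

Local Open Scope ring_scope.

Lemma InP (T : eqType) (x : T) (s : seq T) : reflect (List.In x s) (x \in s).
Proof.
elim: s => [|y s IHs] /=; first by right.
rewrite in_cons; apply: (iffP orP) => [[/eqP ->|/IHs]|[->|/IHs ->]]; rewrite ?eqxx ?orbT;
  by [left | right].
Qed.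

Lemma In_allpairs (S T U : Type) (f : S -> T -> U) s t x y :
  List.In x s -> List.In y t -> List.In (f x y) [seq f x y | x <- s, y <- t].
Proof.
move=> + yt; elim: s => //= x' s IHs [<- | /IHs xs]; apply: List.in_or_app.
- by left; apply: List.in_map.
- by right.
Qed.

Definition classb (P : Prop) : bool := if excluded_middle_informative P then true else false.

Lemma classbP (P : Prop) : reflect P (classb P).
Proof. by rewrite /classb; case: excluded_middle_informative => p; constructor. Qed.

Section AdditiveSubgroups.
Variable N : zmodType.

Definition is_addsubgroup (S : N -> Prop) :=
  [/\ S 0, forall x y, S x -> S y -> S (x + y) & forall x, S x -> S (- x)].

Lemma addsubgroupB S x y : is_addsubgroup S -> S x -> S y -> S (x - y).
Proof. by case=> _ SD SN Sx /SN; apply: SD. Qed.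

Lemma addsubgroupMz S x k : is_addsubgroup S -> S x -> S (x *~ k).
Proof.
case=> S0 SD SN Sx; have Sxn n : S (x *+ n) by elim: n => [|n]; rewrite ?mulrS; auto.
by case: k => n; rewrite ?NegzE ?mulrNz -pmulrn; auto.
Qed.

Lemma addsubgroup_subC S x y : is_addsubgroup S -> S (x - y) -> S (y - x).
Proof. by case=> _ _ SN /SN; rewrite opprB. Qed.

Lemma addsubgroup_sub_trans S y x z :
  is_addsubgroup S -> S (x - y) -> S (y - z) -> S (x - z).
Proof. by case=> _ SD _ Sxy /(SD _ _ Sxy); rewrite addrA subrK. Qed.

Lemma additive_mulrz (f : N -> N) :
  (forall x y, f (x + y) = f x + f y) -> forall x k, f (x *~ k) = f x *~ k.
Proof.
move=> fD.
have f0 : f 0 = 0 by apply: (addrI (f 0)); rewrite -fD !addr0.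
have fN x : f (- x) = - f x by apply: (addrI (f x)); rewrite -fD !subrr.
have fMn x n : f (x *+ n) = f x *+ n by elim: n => [|n IHn]; rewrite ?mulrS ?fD ?IHn.
by move=> x [] n; rewrite ?NegzE ?mulrNz -!pmulrn ?fN fMn.
Qed.

Fixpoint zspan (us : seq N) (x : N) : Prop :=
  if us is u :: us' then exists k : int, zspan us' (x - u *~ k) else x = 0.

Lemma zspan0 us : zspan us 0.
Proof. by elim: us => //= u us IHus; exists 0; rewrite mulr0z subr0. Qed.

Lemma zspanD us x y : zspan us x -> zspan us y -> zspan us (x + y).
Proof.
elim: us x y => [|u us IHus] x y /=; first by move=> -> ->; rewrite addr0.
by case=> k /IHus spx [l /spx]; exists (k + l); rewrite mulrzDr opprD addrACA.
Qed.

Lemma zspanN us x : zspan us x -> zspan us (- x).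
Proof.
elim: us x => [|u us IHus] x /=; first by move=> ->; rewrite oppr0.
by case=> k /IHus; exists (- k); rewrite mulrNz -opprD.
Qed.

Lemma zspan_addsubgroup us : is_addsubgroup (zspan us).
Proof. by split; [apply: zspan0 | apply: zspanD | apply: zspanN]. Qed.

Lemma zspan_cons u us x : zspan us x -> zspan (u :: us) x.
Proof. by exists 0; rewrite mulr0z subr0. Qed.

Lemma zspan_head u us : zspan (u :: us) u.
Proof. by exists 1; rewrite mulr1z subrr; apply: zspan0. Qed.

Lemma zspan_sub_additive (f : N -> N) (S : N -> Prop) us x :
  (forall x y, f (x + y) = f x + f y) -> is_addsubgroup S ->
  (forall u, u \in us -> S (f u)) -> zspan us x -> S (f x).
Proof.
move=> fD S_add; elim: us x => [|u us IHus] x S_us /=.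
  by move=> ->; rewrite -(mulr0z 0) additive_mulrz // mulr0z; case: S_add.
case=> k span_x; have -> : x = (x - u *~ k) + u *~ k by rewrite subrK.
rewrite fD (additive_mulrz fD).
case: (S_add) => _ SD _; apply: SD.
  by apply: (IHus _ _ span_x) => v v_us; apply: S_us; rewrite inE v_us orbT.
by apply: addsubgroupMz => //; apply: S_us; rewrite inE eqxx.
Qed.

End AdditiveSubgroups.

Section ModularSpan.
Variables (N : zmodType) (N0 : N -> Prop).
Hypothesis N0_add : is_addsubgroup N0.

Definition zspan_mod (us : seq N) (x : N) := exists2 w, zspan us w & N0 (x - w).

Fixpoint mod_chain (us : seq N) : Prop :=
  if us is u :: us' then ~ zspan_mod us' u /\ mod_chain us' else True.

Lemma zspan_mod_cons u us x : zspan_mod us x -> zspan_mod (u :: us) x.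
Proof. by case=> w span_w N0_xw; exists w => //; apply: zspan_cons. Qed.

Lemma exists_mod_chain (l : seq N) :
  exists2 us, mod_chain us & {in l, forall x, zspan_mod us x}.
Proof.
elim: l => [|x l [us chain_us l_us]]; first by exists [::].
have [x_us | x_us] := classbP (zspan_mod us x).
  by exists us => // y; rewrite inE => /predU1P [-> | /l_us].
exists (x :: us) => // y; rewrite inE => /predU1P [-> | /l_us]; last exact: zspan_mod_cons.
by exists x; [apply: zspan_head | rewrite subrr; case: N0_add].
Qed.

Hypothesis N0_torsion : forall u, exists2 m, (0 < m)%N & N0 (u *+ m).

(* Take the relation [u *+ n - w], [w] in [zspan us], with least [n > 0].
   Writing [z = u *~ (q * n + r) + ...] with [0 <= r < n], the element [u *+ r]
   lies in [zspan us + N0], so [r = 0] by minimality of [n], and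
   [z - (u *+ n - w) *~ q] lies in [zspan us :&: N0]. *)
Lemma zspanI_spanned (us : seq N) :
  exists rel, [/\ size rel = size us, {in rel, forall r, N0 r} &
                  forall z, zspan us z -> N0 z -> zspan rel z].
Proof.
elim: us => [|u us [rel [size_rel N0_rel span_rel]]]; first by exists [::].
have ex_mul : exists n, (0 < n)%N && classb (zspan_mod us (u *+ n)).
  have [m m_gt0 N0_um] := N0_torsion u; exists m; rewrite m_gt0.
  by apply/classbP; exists 0; [apply: zspan0 | rewrite subr0].
case: (ex_minnP ex_mul) => n /andP [n_gt0 /classbP [w span_w N0_unw]] n_min.
exists ((u *+ n - w) :: rel); split => /=; first by rewrite size_rel.
  by move=> r; rewrite inE => /predU1P [-> | /N0_rel].
move=> z [k span_zk] N0_z.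
have [q [r [def_k r_lt_n]]] : exists q (r : nat), k = q * n%:Z + r%:Z /\ (r < n)%N.
  have n_neq0 : n%:Z != 0 by rewrite eqz_nat -lt0n.
  exists (k %/ n)%Z, `|(k %% n)%Z|%N; rewrite gez0_abs ?modz_ge0 //.
  by split; [apply: divz_eq | rewrite -ltz_nat gez0_abs ?modz_ge0 // ltz_pmod].
set z' := z - (u *+ n - w) *~ q.
have N0_z' : N0 z' by apply: addsubgroupB => //; apply: addsubgroupMz.
have span_z' : zspan us (z' - u *+ r).
  have -> : z' - u *+ r = (z - u *~ k) + w *~ q.
    rewrite /z' def_k mulrzDr -mulrzA_C -!pmulrn mulrzBl.
    by rewrite opprB opprD !addrA (addrAC z (w *~ q)) (addrAC _ (w *~ q)).
  by apply: zspanD => //; apply: addsubgroupMz => //; apply: zspan_addsubgroup.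
have r_eq0 : r = 0%N.
  apply/eqP; rewrite -leqn0 leqNgt; apply/negP => r_gt0.
  suff : (n <= r)%N by rewrite leqNgt r_lt_n.
  apply: n_min; rewrite r_gt0; apply/classbP.
  by exists (- (z' - u *+ r)); [apply: zspanN | rewrite opprK addrC subrK].
by exists q; apply: span_rel => //; move: span_z'; rewrite r_eq0 mulr0n subr0.
Qed.

End ModularSpan.

Section FiniteIndex.
Variables (N : zmodType) (N0 : N -> Prop) (b : nat).
Hypothesis N0_add : is_addsubgroup N0.

Lemma has_index_class_map : has_index N0 b ->
  exists (c : N -> 'I_b) (rep : 'I_b -> N),
    (forall x y, c x = c y <-> N0 (x - y)) /\ cancel rep c.
Proof.
case=> reps [_ [reps_uniq reps_cover]]; pose rep (i : 'I_b) := nth 0 reps i.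
have rep_inj i j : N0 (rep i - rep j) -> i = j.
  by move=> N0_ij; apply: val_inj; apply: reps_uniq (ltn_ord i) (ltn_ord j) N0_ij.
have [c N0_c] : exists c : N -> 'I_b, forall x, N0 (x - rep (c x)).
  have class x : exists i : 'I_b, N0 (x - rep i).
    by have [i [lt_ib N0_xi]] := reps_cover x; exists (Ordinal lt_ib).
  by exists (fun x => proj1_sig (constructive_indefinite_description _ (class x))) => x;
    case: constructive_indefinite_description.
exists c, rep; split.
- move=> x y; split => [c_xy | N0_xy].
    apply: (addsubgroup_sub_trans (y := rep (c x))) => //.
    by rewrite c_xy; apply: addsubgroup_subC.
  apply: rep_inj; apply: (addsubgroup_sub_trans (y := x)) => //; first exact: addsubgroup_subC.
  exact: (addsubgroup_sub_trans (y := y)).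
- by move=> i; symmetry; apply: rep_inj.
Qed.

Variables (c : N -> 'I_b) (rep : 'I_b -> N).
Hypotheses (cP : forall x y, c x = c y <-> N0 (x - y)) (repK : cancel rep c).

Lemma class_torsion u : exists2 m, (0 < m)%N & N0 (u *+ m).
Proof.
have : ~~ injectiveb (fun i : 'I_b.+1 => c (u *+ i)).
  by apply/injectiveP => /leq_card; rewrite !card_ord ltnn.
case/injectivePn => i [j neq_ij /cP N0_ij].
case: (ltngtP i j) => [lt_ij | lt_ji | /val_inj eq_ij]; last by rewrite eq_ij eqxx in neq_ij.
- by exists (j - i)%N; rewrite ?subn_gt0 // mulrnBr 1?ltnW //; apply: addsubgroup_subC.
- by exists (i - j)%N; rewrite ?subn_gt0 // mulrnBr // ltnW.
Qed.

Lemma zspan_mod_class us x y : c x = c y -> zspan_mod N0 us y -> zspan_mod N0 us x.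
Proof.
by move=> /cP N0_xy [w span_w N0_yw]; exists w => //; apply: (addsubgroup_sub_trans (y := y)).
Qed.

Lemma class_addr x y a : c (x + a) = c (y + a) <-> c x = c y.
Proof. by rewrite !cP (addrC y) addrKA. Qed.

Definition mod_classes us := [set i : 'I_b | classb (zspan_mod N0 us (rep i))].

Lemma mod_classesP us i : reflect (zspan_mod N0 us (rep i)) (i \in mod_classes us).
Proof. by rewrite inE; apply: classbP. Qed.

(* Translation by [u] maps the classes of [zspan us + N0] injectively to
   classes of [zspan (u :: us) + N0] outside of them. *)
Lemma card_mod_classes_cons u us : ~ zspan_mod N0 us u ->
  (#|mod_classes us|.*2 <= #|mod_classes (u :: us)|)%N.
Proof.
move=> u_notin; pose f i := c (rep i + u).
have f_inj : injective f by move=> i j /class_addr; rewrite !repK.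
have f_classes j : zspan_mod N0 us (rep j) -> exists2 w, zspan us w & f j = c (w + u).
  by case=> w span_w N0_jw; exists w => //; apply/class_addr/cP.
have sub_classes : mod_classes us :|: f @: mod_classes us \subset mod_classes (u :: us).
  rewrite subUset; apply/andP; split; apply/subsetP => i.
    by move/mod_classesP/(zspan_mod_cons u)/mod_classesP.
  case/imsetP => j /mod_classesP/f_classes [w span_w def_fj] ->; apply/mod_classesP.
  apply: (@zspan_mod_class _ _ (w + u)); first by rewrite repK.
  exists (w + u); first exact: zspanD (zspan_cons _ span_w) (zspan_head _ _).
  by rewrite subrr; case: N0_add.
have disjoint_classes : mod_classes us :&: f @: mod_classes us = set0.
  apply/setP => i; rewrite !inE; apply/negbTE/andP => -[/classbP [w' span_w' N0_iw']].
  case/imsetP => j /mod_classesP/f_classes [w span_w def_fj] def_i; apply: u_notin.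
  exists (w' - w); first by apply: zspanD => //; apply: zspanN.
  have /cP : c (w + u) = c w' by rewrite -def_fj -def_i -{1}(repK i); apply/cP.
  by rewrite opprB addrA (addrC u).
rewrite -addnn -{2}(card_imset (mod_classes us) f_inj) -cardsUI disjoint_classes cards0 addn0.
exact: subset_leq_card.
Qed.

Lemma mod_chain_card us : mod_chain N0 us -> (2 ^ size us <= #|mod_classes us|)%N.
Proof.
elim: us => [_ | u us IHus [u_notin /IHus le_us]] /=.
  rewrite card_gt0; apply/set0Pn; exists (c 0); apply/mod_classesP.
  by exists 0; [|apply/cP; rewrite repK].
by rewrite expnS mul2n (leq_trans _ (card_mod_classes_cons u_notin)) // leq_double.
Qed.

Lemma exists_short_mod_span :
  exists2 us, (2 ^ size us <= b)%N & forall x, zspan_mod N0 us x.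
Proof.
have [us chain_us reps_us] := exists_mod_chain N0_add [seq rep i | i <- enum 'I_b].
exists us.
  apply: leq_trans (mod_chain_card chain_us) _.
  by rewrite -[X in (_ <= X)%N]card_ord max_card.
move=> x; apply: (@zspan_mod_class _ _ (rep (c x))); first by rewrite repK.
by apply: reps_us; rewrite map_f ?mem_enum.
Qed.

End FiniteIndex.

Section GroupAction.
Variables (G : Type) (mul : G -> G -> G) (one : G) (inv : G -> G).
Hypothesis G_grp : is_group mul one inv.

Lemma grp_mulrV x : mul x (inv x) = one.
Proof.
rewrite -[LHS](grp_mul1 G_grp) -[X in mul X _](grp_mulV G_grp (inv x)) -(grp_mulA G_grp).
by rewrite (grp_mulA G_grp (inv x)) (grp_mulV G_grp) (grp_mul1 G_grp) (grp_mulV G_grp).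
Qed.

Lemma grp_mulr1 x : mul x one = x.
Proof. by rewrite -(grp_mulV G_grp x) (grp_mulA G_grp) grp_mulrV (grp_mul1 G_grp). Qed.

Lemma grp_inv1 : inv one = one.
Proof. by rewrite -[LHS]grp_mulr1 (grp_mulV G_grp). Qed.

Lemma grp_invK x : inv (inv x) = x.
Proof.
by rewrite -[LHS]grp_mulr1 -(grp_mulV G_grp x) (grp_mulA G_grp) (grp_mulV G_grp) (grp_mul1 G_grp).
Qed.

Lemma grp_invM x y : inv (mul x y) = mul (inv y) (inv x).
Proof.
have xy_yx : mul (mul x y) (mul (inv y) (inv x)) = one.
  by rewrite -(grp_mulA G_grp) (grp_mulA G_grp y) grp_mulrV (grp_mul1 G_grp) grp_mulrV.
by rewrite -[LHS]grp_mulr1 -xy_yx (grp_mulA G_grp) (grp_mulV G_grp) (grp_mul1 G_grp).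
Qed.

Variables (N : zmodType) (act : G -> N -> N).
Hypothesis act_mod : is_ZG_module mul one act.

Lemma submodule_addsubgroup S : is_submodule act S -> is_addsubgroup S.
Proof. by case. Qed.

Lemma in_submodule_gen_submodule P : is_submodule act (in_submodule_gen act P).
Proof. by split; [apply: sm_zero | apply: sm_add | apply: sm_opp | apply: sm_act]. Qed.

Lemma in_submodule_gen_sub (P S : N -> Prop) : is_submodule act S ->
  (forall x, P x -> S x) -> forall x, in_submodule_gen act P x -> S x.
Proof. by case=> S0 SD SN SA PS x; elim => //; auto. Qed.

Lemma act_stable_subgroup_gen (gens : seq G) (S : N -> Prop) :
  (forall g, List.In g gens -> forall y, S y -> S (act g y) /\ S (act (inv g) y)) ->
  forall h, in_subgroup_gen mul one inv (fun x => List.In x gens) h ->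
  forall y, S y -> S (act h y).
Proof.
move=> S_gens h gen_h; suff: forall y, S y -> S (act h y) /\ S (act (inv h) y).
  by move=> S_h y /S_h [].
elim: gen_h => [g /S_gens // | | g h' _ S_g _ S_h | g _ S_g] y Sy.
- by rewrite grp_inv1 (act_one act_mod).
- rewrite grp_invM !(act_mul act_mod).
  by split; [apply: (S_g _ (S_h _ Sy).1).1 | apply: (S_h _ (S_g _ Sy).2).2].
- by rewrite grp_invK; split; [apply: (S_g _ Sy).2 | apply: (S_g _ Sy).1].
Qed.

Definition act_translates (gens : seq G) (U : seq N) :=
  [seq act g u | g <- gens ++ map inv gens, u <- U].

Definition add_zspan (J : N -> Prop) (U : seq N) (x : N) :=
  exists j z, [/\ J j, zspan U z & x = j + z].

Lemma add_zspan_submodule (gens : seq G) J U :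
  group_generated_by mul one inv gens -> is_submodule act J ->
  (forall y, List.In y (act_translates gens U) -> add_zspan J U y) ->
  is_submodule act (add_zspan J U).
Proof.
move=> gen_G J_sub J_U; have [J0 JD JN JA] := J_sub.
have S_add : is_addsubgroup (add_zspan J U).
  split; first by exists 0, 0; split; [exact: J0 | apply: zspan0 | rewrite addr0].
    move=> _ _ [j [z [Jj Uz ->]]] [j' [z' [Jj' Uz' ->]]].
    by exists (j + j'), (z + z'); split; [apply: JD | apply: zspanD | rewrite addrACA].
  move=> _ [j [z [Jj Uz ->]]].
  by exists (- j), (- z); split; [apply: JN | apply: zspanN | rewrite opprD].
have S_act h : (forall u, u \in U -> add_zspan J U (act h u)) ->
    forall y, add_zspan J U y -> add_zspan J U (act h y).
  move=> S_hU _ [j [z [Jj Uz ->]]]; rewrite (act_add act_mod).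
  case: (S_add) => _ SD _; apply: SD.
    by exists (act h j), 0; split; [apply: JA | apply: zspan0 | rewrite addr0].
  exact: (zspan_sub_additive (act_add act_mod h) S_add S_hU Uz).
split; try by case: S_add.
move=> h; apply: act_stable_subgroup_gen (gen_G h) => g g_gens.
by split; apply: S_act => // u /InP u_U; apply: J_U; apply: In_allpairs => //;
  apply: List.in_or_app; [left | right; apply: List.in_map].
Qed.

Lemma submodule_generators (gens : seq G) (gensN U rel : seq N) (N0 : N -> Prop) :
  group_generated_by mul one inv gens ->
  (forall x, in_submodule_gen act (fun y => List.In y gensN) x) ->
  is_submodule act N0 -> (forall x, zspan_mod N0 U x) ->
  {in rel, forall r, N0 r} -> (forall z, zspan U z -> N0 z -> zspan rel z) ->
  exists gens0, module_generated_by act N0 gens0 /\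
    size gens0 = (size rel + size (gensN ++ act_translates gens U))%N.
Proof.
move=> gen_G gen_N N0_sub U_N0 N0_rel rel_UN0.
have [rd rdP] : exists rd : N -> N, forall y, zspan U (rd y) /\ N0 (y - rd y).
  have U_N0' y : exists w, zspan U w /\ N0 (y - w) by case: (U_N0 y) => w; exists w.
  exists (fun y => proj1_sig (constructive_indefinite_description _ (U_N0' y))) => y.
  by case: constructive_indefinite_description.
pose L := gensN ++ act_translates gens U; pose gens0 := rel ++ [seq y - rd y | y <- L].
pose J := in_submodule_gen act (fun y => List.In y gens0).
have N0_gens0 x : List.In x gens0 -> N0 x.
  by move/InP; rewrite mem_cat => /orP [/N0_rel // | /mapP [y _ ->]]; case: (rdP y).
have J_N0 : forall x, J x -> N0 x by apply: in_submodule_gen_sub.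
have J_sub : is_submodule act J by apply: in_submodule_gen_submodule.
have [_ JD _ _] := J_sub.
have L_JU y : List.In y L -> add_zspan J U y.
  move=> /InP L_y; exists (y - rd y), (rd y); split; [| by case: (rdP y) | by rewrite subrK].
  by apply: sm_base; apply/InP; rewrite mem_cat (map_f (fun y => y - rd y) L_y) orbT.
have JU_sub : is_submodule act (add_zspan J U).
  by apply: add_zspan_submodule => // y translates_y; apply: L_JU; apply: List.in_or_app; right.
have N_JU : forall x, add_zspan J U x.
  move=> x; apply: in_submodule_gen_sub (gen_N x) => // y gensN_y.
  by apply: L_JU; apply: List.in_or_app; left.
exists gens0; split; last by rewrite /gens0 size_cat size_map.
split => // x; split => [N0_x | /J_N0 //].
have [j [z [Jj Uz def_x]]] := N_JU x.
have N0_add := submodule_addsubgroup N0_sub.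
have N0_z : N0 z.
  have -> : z = x - j by rewrite def_x (addrC j) addrK.
  exact: addsubgroupB N0_add N0_x (J_N0 _ Jj).
rewrite def_x; apply: JD => //.
apply: (zspan_sub_additive (f := id)) (rel_UN0 z Uz N0_z) => // [|r rel_r].
  exact: submodule_addsubgroup J_sub.
by apply: sm_base; apply/InP; rewrite mem_cat rel_r.
Qed.

End GroupAction.

Theorem lemma3 (G : Type) (mul : G -> G -> G) (one : G) (inv : G -> G)
  (N : zmodType) (act : G -> N -> N) (d t b : nat) (N0 : N -> Prop) :
  is_group mul one inv ->
  (exists gens : seq G, size gens = d /\ group_generated_by mul one inv gens) ->
  is_ZG_module mul one act ->
  (exists gensN : seq N, size gensN = t /\ module_generated_by act (fun _ => True) gensN) ->
  is_submodule act N0 ->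
  has_index N0 b ->
  exists gens0 : seq N, module_generated_by act N0 gens0 /\
    Rle (INR (size gens0)) (gen_bound t d b).
Proof.
move=> G_grp [gens [<- gen_G]] act_mod [gensN [<- [_ gen_N]]] N0_sub N0_index.
have N0_add := submodule_addsubgroup N0_sub.
have [c [rep [cP repK]]] := has_index_class_map N0_add N0_index.
have [U U_small U_N0] := exists_short_mod_span N0_add cP repK.
have [rel [size_rel N0_rel rel_UN0]] := zspanI_spanned N0_add (class_torsion N0_add cP) U.
have [gens0 [gen_N0 size_gens0]] := submodule_generators G_grp act_mod gen_G
  (fun x => (gen_N x).1 I) N0_sub U_N0 N0_rel rel_UN0.
exists gens0; split => //.
rewrite size_gens0 size_cat size_allpairs size_cat size_map size_rel.
have -> : (size U + (size gensN + (size gens + size gens) * size U)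
  = size gensN + (2 * size gens + 1) * size U)%N by lia.
exact: le_gen_bound.
Qed.
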